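(* Let $g$ be a nonnegative even function on $\mathbb{R}$ with $\int_{\mathbb{R}} g(v)\,dv=1$ and $\int_{\mathbb{R}} g(v)v^2\,dv=1$. Suppose that for some $s\in(0,2]$, $K_1>1$, $K_2>0$, $$|\hat g(\xi)|\leq K_1e^{-K_2|\xi|^s}\quad\text{for all }\xi\in\mathbb{R}.$$ Then there exists $\eta>0$ such that for every $R>\eta$ there exists $K>0$ (depending on $R$) with $$|\hat g(\xi)|\leq e^{-K|\xi|^2}\ \text{ for } |\xi|<R,\qquad |\hat g(\xi)|\leq e^{-K|\xi|^s}\ \text{ for } |\xi|\geq R.$$
   Context: $\hat g(\xi)=\int_{\mathbb{R}} g(v)e^{-i\xi v}dv$. *)

From HB Require Import structures.
From mathcomp Require Import all_boot all_order all_algebra.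
From mathcomp Require Import all_classical all_reals all_analysis.
Set Implicit Arguments. Unset Strict Implicit. Unset Printing Implicit Defensive.
Import Order.TTheory GRing.Theory Num.Theory.
Import numFieldNormedType.Exports.
Local Open Scope classical_set_scope.
Local Open Scope ring_scope.

(* Fourier transform  \hat g(xi) = \int_R g(v) e^{-i xi v} dv, written via its
   real and imaginary parts (Lebesgue integrals over R). *)
Definition ft_re (R : realType) (g : R -> R) (xi : R) : R :=
  Rintegral lebesgue_measure setT (fun v => g v * cos (xi * v)).
Definition ft_im (R : realType) (g : R -> R) (xi : R) : R :=
  - Rintegral lebesgue_measure setT (fun v => g v * sin (xi * v)).
Definition ft_abs (R : realType) (g : R -> R) (xi : R) : R :=
  Num.sqrt (ft_re g xi ^+ 2 + ft_im g xi ^+ 2).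

From HB Require Import structures.
From mathcomp Require Import all_boot all_order all_algebra.
From mathcomp Require Import all_classical all_reals all_analysis.
From mathcomp Require Import measurable_realfun ring lra.
Set Implicit Arguments. Unset Strict Implicit. Unset Printing Implicit Defensive.
Import Order.TTheory GRing.Theory Num.Theory.
Import numFieldNormedType.Exports.
Local Open Scope classical_set_scope.
Local Open Scope ring_scope.

(* Since g is even, \hat g is the real function G(xi) = \int g(v) cos(xi v) dv,
   and G(0) = 1.  As 1 - cos 2x = 2 (1 - cos x) (1 + cos x) <= 4 (1 -+ cos x),
   integrating against g gives 1 - G(2 xi) <= 4 (1 -+ G(xi)).  The decay
   hypothesis yields eta with |G| <= 1/2 and |G(xi)| <= exp(-K2 |xi|^s / 2) for
   |xi| >= eta.  As 1 - G >= 1/2 on the annulus eta <= |xi| <= 2 eta, halving xi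
   repeatedly (each halving costs at most a factor 4 in 1 - G and gains exactly
   4 in xi^2) gives 1 - G(xi) >= xi^2 / (8 eta^2) for |xi| <= 2 eta; the second
   inequality then gives |G(xi)| <= 1 - xi^2 / (8 eta^2) <= exp(-xi^2 / (8 eta^2))
   for |xi| <= eta.  On eta <= |xi| < R the bound 1/2 is at most exp(-K xi^2)
   once K <= ln 2 / R^2. *)

Section QuadraticDecayNearZero.
Variables (R : realType) (G : R -> R) (eta : R).
Hypothesis G0 : G 0 = 1.
Hypothesis G_double_sub : forall xi, 1 - G (2 * xi) <= 4 * (1 - G xi).
Hypothesis G_double_add : forall xi, 1 - G (2 * xi) <= 4 * (1 + G xi).
Hypothesis eta_gt0 : 0 < eta.
Hypothesis G_le_half : forall xi, eta <= `|xi| -> G xi <= 1 / 2.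

Let c := (8 * eta ^+ 2)^-1.

Let c_gt0 : 0 < c.
Proof. by rewrite invr_gt0 mulr_gt0 // exprn_gt0. Qed.

Lemma sqr_le_one_subG_annulus xi :
  eta <= `|xi| -> `|xi| <= 2 * eta -> c * xi ^+ 2 <= 1 - G xi.
Proof.
move=> eta_xi xi_2eta.
have xi2 : xi ^+ 2 <= (2 * eta) ^+ 2.
  by rewrite -(real_normK (num_real xi)); have := normr_ge0 xi; nra.
have : c * xi ^+ 2 <= c * (2 * eta) ^+ 2 by rewrite ler_wpM2l // ltW.
have -> : c * (2 * eta) ^+ 2 = 1 / 2 by rewrite /c; field; rewrite gt_eqF.
by have := G_le_half eta_xi; lra.
Qed.

Lemma sqr_le_one_subG_dyadic k xi :
  eta / 2 ^+ k <= `|xi| -> `|xi| <= 2 * eta -> c * xi ^+ 2 <= 1 - G xi.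
Proof.
elim: k xi => [|k IHk] xi lo hi.
  by rewrite expr0 divr1 in lo; exact: sqr_le_one_subG_annulus.
have [eta_xi | xi_eta] := lerP eta `|xi|; first exact: sqr_le_one_subG_annulus.
have halve : eta / 2 ^+ k = 2 * (eta / 2 ^+ k.+1).
  by rewrite exprS; field; rewrite expf_neq0.
have := IHk (2 * xi); rewrite normrM ger0_norm // => /(_ ltac:(lra)) /(_ ltac:(lra)).
have := G_double_sub xi; lra.
Qed.

Lemma sqr_le_one_subG xi : `|xi| <= 2 * eta -> c * xi ^+ 2 <= 1 - G xi.
Proof.
move=> xi_2eta; have [-> | xi_neq0] := eqVneq xi 0.
  by rewrite G0 expr0n /= mulr0 subrr.
have xi_gt0 : 0 < `|xi| by rewrite normr_gt0.
have := archi_boundP (divr_ge0 (ltW eta_gt0) (ltW xi_gt0)).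
set k := Num.Def.archi_bound _ => eta_xi_k.
apply: (@sqr_le_one_subG_dyadic k) => //.
have k_lt_2k : k%:R < 2 ^+ k :> R by rewrite -natrX ltr_nat ltn_expl.
rewrite ler_pdivrMr ?exprn_gt0 // mulrC -ler_pdivrMr //.
exact/ltW/(lt_trans eta_xi_k).
Qed.

Lemma normG_le_expR_sqr xi : `|xi| <= eta -> `|G xi| <= expR (- c * xi ^+ 2).
Proof.
move=> xi_eta; have xi_2eta : `|xi| <= 2 * eta by have := ltW eta_gt0; lra.
have lower := sqr_le_one_subG xi_2eta.
have upper : c * (2 * xi) ^+ 2 <= 1 - G (2 * xi).
  by apply: sqr_le_one_subG; rewrite normrM ger0_norm // ler_pM2l.
rewrite [c * _](_ : _ = 4 * (c * xi ^+ 2)) in upper; last by ring.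
have double_add := G_double_add xi.
apply: le_trans (expR_ge1Dx _); rewrite ler_norml; apply/andP; split; lra.
Qed.

End QuadraticDecayNearZero.

Lemma expR_Nln2 (R : realType) : expR (- ln 2) = 1 / 2 :> R.
Proof. by rewrite expRN lnK ?div1r // posrE. Qed.

Lemma stretched_decay_tail (R : realType) (G : R -> R) (s K1 K2 : R) :
  0 < s -> 1 <= K1 -> 0 < K2 ->
  (forall xi, `|G xi| <= K1 * expR (- K2 * `|xi| `^ s)) ->
  exists2 eta : R, 0 < eta & forall xi, eta <= `|xi| ->
    `|G xi| <= expR (- (K2 / 2) * `|xi| `^ s) /\ `|G xi| <= 1 / 2.
Proof.
move=> s_gt0 K1_ge1 K2_gt0 decay.
have ln2_gt0 : 0 < ln (2 : R) by rewrite ln_gt0 // ltr1n.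
have lnK1_ge0 : 0 <= ln K1 by rewrite ln_ge0.
have ln2K1 : ln (2 * K1) = ln 2 + ln K1 by rewrite lnM ?posrE //; lra.
pose T := 2 * ln (2 * K1) / K2.
have T_gt0 : 0 < T by rewrite /T ln2K1 divr_gt0 //; lra.
exists (T `^ s^-1) => [|xi eta_xi]; first exact: powR_gt0.
have T_le_t : T <= `|xi| `^ s.
  have := ge0_ler_powR (ltW s_gt0) (powR_ge0 _ _) (normr_ge0 xi) eta_xi.
  by rewrite -powRrM mulVf ?gt_eqF // powRr1 // ltW.
have := decay xi; set t := `|xi| `^ s in T_le_t *.
have K2T : K2 * T = 2 * ln (2 * K1) by rewrite /T mulrCA divff ?gt_eqF // mulr1.
have : K2 * T <= K2 * t by rewrite ler_pM2l.
rewrite K2T ln2K1 => K2t.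
have -> : K1 * expR (- K2 * t) = expR (ln K1 - K2 * t).
  by rewrite expRD lnK ?posrE ?mulNr //; lra.
move=> decay_t; rewrite -expR_Nln2.
by split; apply: le_trans decay_t _; rewrite ler_expR; lra.
Qed.

Lemma gaussian_then_stretched_bound (R : realType) (G : R -> R) (s K1 K2 : R) :
  G 0 = 1 ->
  (forall xi, 1 - G (2 * xi) <= 4 * (1 - G xi)) ->
  (forall xi, 1 - G (2 * xi) <= 4 * (1 + G xi)) ->
  0 < s -> 1 <= K1 -> 0 < K2 ->
  (forall xi, `|G xi| <= K1 * expR (- K2 * `|xi| `^ s)) ->
  exists2 eta : R, 0 < eta &
    forall Rr : R, eta < Rr ->
      exists2 K : R, 0 < K &
        (forall xi : R, `|xi| < Rr -> `|G xi| <= expR (- K * xi ^+ 2)) /\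
        (forall xi : R, Rr <= `|xi| -> `|G xi| <= expR (- K * `|xi| `^ s)).
Proof.
move=> G0 double_sub double_add s_gt0 K1_ge1 K2_gt0 decay.
have [eta eta_gt0 tail] := stretched_decay_tail s_gt0 K1_ge1 K2_gt0 decay.
have G_le_half xi : eta <= `|xi| -> G xi <= 1 / 2.
  by move=> /tail[_]; apply: le_trans; rewrite ler_norm.
have near0 := normG_le_expR_sqr G0 double_sub double_add eta_gt0 G_le_half.
exists eta => // Rr eta_Rr.
have Rr_gt0 : 0 < Rr by lra.
set c := (8 * eta ^+ 2)^-1 in near0.
have c_gt0 : 0 < c by rewrite invr_gt0 mulr_gt0 // exprn_gt0.
have ln2_gt0 : 0 < ln (2 : R) by rewrite ln_gt0 // ltr1n.
pose K := Num.min c (Num.min (K2 / 2) (ln 2 / Rr ^+ 2)).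
have K_gt0 : 0 < K by rewrite !lt_min c_gt0 !divr_gt0 // exprn_gt0.
exists K => //.
have [K_le_c K_le_K2 K_le_ln2] : [/\ K <= c, K <= K2 / 2 & K <= ln 2 / Rr ^+ 2].
  by split; rewrite ?ge_min ?lexx ?orbT.
split=> xi xi_Rr.
- have K_xi2 : K * xi ^+ 2 <= c * xi ^+ 2 by rewrite ler_wpM2r ?sqr_ge0.
  have [xi_eta | eta_xi] := lerP `|xi| eta.
    by apply: le_trans (near0 _ xi_eta) _; rewrite ler_expR; lra.
  have [_ /le_trans] := tail xi (ltW eta_xi); apply.
  have xi2_Rr2 : xi ^+ 2 <= Rr ^+ 2.
    by rewrite -(real_normK (num_real xi)) lerXn2r ?nnegrE // ltW.
  have : K * xi ^+ 2 <= ln 2.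
    rewrite (le_trans (ler_wpM2l (ltW K_gt0) xi2_Rr2)) //.
    by rewrite -ler_pdivlMr ?exprn_gt0.
  by rewrite -expR_Nln2 ler_expR; lra.
- have [/le_trans decay_xi _] := tail xi (le_trans (ltW eta_Rr) xi_Rr).
  by apply: decay_xi; rewrite ler_expR !mulNr lerN2 ler_wpM2r ?powR_ge0.
Qed.

Section LebesgueReflection.
Variable R : realType.
Local Notation mu := (@lebesgue_measure R).

(* The measure instance of a pushforward depends on a measurability proof that
   instance inference cannot supply, hence the unshelve. *)
Let mu_oppr : {measure set (measurableTypeR R) -> \bar R}.
Proof.
by unshelve refine (@pushforward _ _ (measurableTypeR R) (measurableTypeR R) R
  mu -%R : {measure set _ -> \bar R}).
Defined.

Lemma lebesgue_measure_preimage_oppr (A : set R) :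
  measurable A -> mu (-%R @^-1` A) = mu A.
Proof.
move=> mA; symmetry.
apply: (lebesgue_measure_unique (mu := mu_oppr)) => // _ [[a b] _ <-].
rewrite /= /pushforward.
have -> : -%R @^-1` `]a, b] = `[- b, - a[%classic :> set R.
  apply/seteqP; split => x /=; rewrite !in_itv /= => /andP[lo hi].
    by rewrite lerNl hi ltrNr lo.
  by rewrite ltrNr hi lerNl lo.
by rewrite !lebesgue_measure_itv /= !lte_fin ltrN2 opprK addrC.
Qed.

Lemma integral_oppr (f : R -> \bar R) :
  measurable_fun setT f -> mu.-integrable setT (f \o -%R) ->
  (\int[mu]_x f x = \int[mu]_x f (- x)%R)%E.
Proof.
move=> mf intf; rewrite (eq_measure_integral mu_oppr); last first.
  by move=> A mA _; rewrite /= /pushforward lebesgue_measure_preimage_oppr.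
by rewrite integral_pushforward.
Qed.

End LebesgueReflection.

Lemma one_sub_cos_double_le (R : realType) (a x : R) :
  a ^+ 2 = 1 -> 1 - cos (2 * x) <= 4 * (1 + a * cos x).
Proof.
(* 4 (1 + a cos x) - (1 - cos 2x) = 2 (1 + a cos x)^2 since a^2 = 1 *)
move=> a2; rewrite mulr_natl cos_mulr2n.
have : (a * cos x) ^+ 2 = cos x ^+ 2 by rewrite exprMn a2 mul1r.
have := sqr_ge0 (1 + a * cos x); nra.
Qed.

Section CosineTransform.
Variables (R : realType) (g : R -> R).
Local Notation mu := (@lebesgue_measure R).
Hypotheses (g_meas : measurable_fun setT g) (g_ge0 : forall v, 0 <= g v).
Hypothesis g_int : mu.-integrable setT (EFin \o g).

Lemma integrable_mul_bounded (h : R -> R) (M : R) :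
  measurable_fun setT h -> (forall x, `|h x| <= M) ->
  mu.-integrable setT (EFin \o (fun v => g v * h v)).
Proof.
move=> mh hM; apply: (le_integrable _ _ _ (integrableZl _ M g_int)) => //.
  exact/measurable_EFinP/measurable_funM.
move=> x _ /=; rewrite lee_fin !normrM (ger0_norm (g_ge0 x)) mulrC ler_wpM2r //.
exact: le_trans (hM x) (ler_norm M).
Qed.

Let measurable_dilate (f : R -> R) (xi : R) :
  continuous f -> measurable_fun setT (fun v => f (xi * v)).
Proof.
move=> cf; apply: measurableT_comp; last exact: mulrl_measurable.
exact: continuous_measurable_fun.
Qed.

Let measurable_cos (xi : R) : measurable_fun setT (fun v => cos (xi * v)).
Proof. by apply: measurable_dilate; exact: continuous_cos. Qed.

Let integrable_mul_cos xi :
  mu.-integrable setT (EFin \o (fun v => g v * cos (xi * v))).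
Proof. exact: integrable_mul_bounded (measurable_cos xi) (fun v => cos_max _). Qed.

Let integrable_mul_1Dcos a xi :
  mu.-integrable setT (EFin \o (fun v => g v * (1 + a * cos (xi * v)))).
Proof.
apply: (integrable_mul_bounded (M := 1 + `|a|)) => [|v].
  by apply: measurable_funD => //; exact: measurable_funM.
rewrite (le_trans (ler_normD _ _)) // normr1 lerD2l normrM -[leRHS]mulr1.
by rewrite ler_wpM2l ?cos_max.
Qed.

Lemma ft_re0 : ft_re g 0 = Rintegral mu setT g.
Proof. by apply: eq_Rintegral => x _; rewrite mul0r cos0 mulr1. Qed.

Lemma Rintegral_mul_1Dcos (a xi : R) :
  Rintegral mu setT (fun v => g v * (1 + a * cos (xi * v))) =
  Rintegral mu setT g + a * ft_re g xi.
Proof.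
rewrite -RintegralZl // -RintegralD //; last first.
  exact: (integrableZl _ a (integrable_mul_cos xi)).
by apply: eq_Rintegral => v _; rewrite mulrDr mulr1 mulrCA.
Qed.

Lemma ft_re_double_le (a xi : R) : a ^+ 2 = 1 ->
  Rintegral mu setT g - ft_re g (2 * xi) <=
  4 * (Rintegral mu setT g + a * ft_re g xi).
Proof.
move=> a2; rewrite -mulN1r -!Rintegral_mul_1Dcos -RintegralZl //.
apply: le_Rintegral => // [|v _].
  exact: (integrableZl _ 4 (integrable_mul_1Dcos a xi)).
by rewrite mulN1r [4 * _]mulrCA -(mulrA 2) ler_wpM2l // one_sub_cos_double_le.
Qed.

Hypothesis g_even : forall v, g (- v) = g v.

Lemma ft_im_even xi : ft_im g xi = 0.
Proof.
have msin : measurable_fun setT (fun v => sin (xi * v)).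
  by apply: measurable_dilate; exact: continuous_sin.
have gsin_int := integrable_mul_bounded msin (fun v => sin_max (xi * v)).
have reflect v : g (- v) * sin (xi * - v) = -1 * (g v * sin (xi * v)).
  by rewrite g_even mulrN sinN mulrN mulN1r.
have : Rintegral mu setT (fun v => g v * sin (xi * v)) =
       - Rintegral mu setT (fun v => g v * sin (xi * v)).
  rewrite {1}/Rintegral integral_oppr; last 2 first.
  - exact/measurable_EFinP/measurable_funM.
  - apply: eq_integrable (integrableZl _ (-1) gsin_int) => // v _ /=.
    by rewrite reflect.
  under eq_integral do rewrite reflect.
  by rewrite -/(Rintegral _ _ _) RintegralZl // mulN1r.
by rewrite /ft_im; lra.
Qed.

Lemma ft_abs_even xi : ft_abs g xi = `|ft_re g xi|.
Proof. by rewrite /ft_abs ft_im_even expr0n /= addr0 sqrtr_sqr. Qed.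

End CosineTransform.

Theorem proposition7 (R : realType) (g : R -> R) (s K1 K2 : R)
  (g_meas : measurable_fun setT g)
  (g_ge0 : forall v, 0 <= g v)
  (g_even : forall v, g (- v) = g v)
  (g_mass : (\int[lebesgue_measure]_(v in setT) (g v)%:E = 1)%E)
  (g_var : (\int[lebesgue_measure]_(v in setT) (g v * v ^+ 2)%:E = 1)%E)
  (hs : 0 < s <= 2) (hK1 : 1 < K1) (hK2 : 0 < K2)
  (hdecay : forall xi : R, ft_abs g xi <= K1 * expR (- K2 * `|xi| `^ s)) :
  exists2 eta : R, 0 < eta &
    forall Rr : R, eta < Rr ->
      exists2 K : R, 0 < K &
        (forall xi : R, `|xi| < Rr -> ft_abs g xi <= expR (- K * xi ^+ 2)) /\
        (forall xi : R, Rr <= `|xi| -> ft_abs g xi <= expR (- K * `|xi| `^ s)).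
Proof.
have g_int : lebesgue_measure.-integrable setT (EFin \o g).
  apply/integrableP; split; first exact/measurable_EFinP.
  under eq_integral do rewrite /= ger0_norm //.
  by rewrite g_mass ltry.
have g_mass1 : Rintegral lebesgue_measure setT g = 1 by rewrite /Rintegral g_mass.
have double_le a xi :
    a ^+ 2 = 1 -> 1 - ft_re g (2 * xi) <= 4 * (1 + a * ft_re g xi).
  by move=> a2; have := ft_re_double_le g_meas g_ge0 g_int xi a2; rewrite g_mass1.
have G0 : ft_re g 0 = 1 by rewrite ft_re0 g_mass1.
have double_sub xi : 1 - ft_re g (2 * xi) <= 4 * (1 - ft_re g xi).
  by rewrite -[- ft_re g xi]mulN1r double_le // sqrrN expr1n.
have double_add xi : 1 - ft_re g (2 * xi) <= 4 * (1 + ft_re g xi).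
  by rewrite -[ft_re g xi]mul1r double_le // expr1n.
have ft_abs_re := ft_abs_even g_meas g_ge0 g_int g_even.
have decay xi : `|ft_re g xi| <= K1 * expR (- K2 * `|xi| `^ s).
  by rewrite -ft_abs_re.
have s_gt0 : 0 < s by case/andP: hs.
have [eta eta_gt0 bounds] :=
  gaussian_then_stretched_bound G0 double_sub double_add s_gt0 (ltW hK1) hK2 decay.
exists eta => // Rr /bounds[K K_gt0 [near far]].
by exists K => //; split=> xi xi_Rr; rewrite ft_abs_re; [exact: near | exact: far].
Qed.
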